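(* Let $V$ be a finite-dimensional vector space over $\mathbb{F}_q$. A metric $d$ on $V$ is a projective metric if and only if it is integral, (integrally) convex, scale-invariant and translation-invariant.
   Context: For a set $\mathcal{F}\subset V$ of pairwise linearly independent (in particular nonzero) vectors, the projective weight is $\operatorname{wt}_{\mathcal{F}}(x)=\min(\{|I|: I\subseteq\mathcal{F},\ x\in\langle I\rangle\}\cup\{\infty\})$ (with $\langle\emptyset\rangle=\{0\}$), and $d_{\mathcal{F}}(x,y)=\operatorname{wt}_{\mathcal{F}}(y-x)$; a metric is projective if it equals $d_{\mathcal{F}}$ for some such $\mathcal{F}$. A metric $d:V\times V\to\mathbb{R}\cup\{\infty\}$ is integral if it takes values in $\mathbb{N}\cup\{\infty\}$; scale-invariant if $d(\alpha x,\alpha y)=d(x,y)$ for all nonzero $\alpha\in\mathbb{F}_q$; translation-invariant if $d(x+z,y+z)=d(x,y)$. An integral metric is convex if for all $v_1,v_2$ with $d(v_1,v_2)<\infty$ and all $i\in\{0,\dots,d(v_1,v_2)\}$ there is $x\in V$ with $d(v_1,x)=i$ and $d(x,v_2)=d(v_1,v_2)-i$. *)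

From HB Require Import structures.
From mathcomp Require Import all_boot all_order all_algebra.
From mathcomp Require Import reals constructive_ereal.

Set Implicit Arguments. Unset Strict Implicit. Unset Printing Implicit Defensive.
Import Order.TTheory GRing.Theory Num.Theory.
Local Open Scope ring_scope.

Section Defs.
Variables (R : realType) (K : finFieldType) (n : nat).
Local Notation V := 'rV[K]_n.

Definition is_metric (d : V -> V -> \bar R) : Prop :=
  [/\ forall x y, (0 <= d x y)%E,
      forall x y, d x y = 0%E <-> x = y,
      forall x y, d x y = d y x &
      forall x y z, (d x z <= d x y + d y z)%E].

Definition pairwise_li (F : {set V}) : Prop :=
  (forall x, x \in F -> x != 0) /\
  (forall x y, x \in F -> y \in F -> x != y -> free [:: x; y]).

Definition spans_in (F : {set V}) (x : V) (I : {set V}) : bool :=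
  (I \subset F) && (x \in <<enum I>>%VS).

Definition proj_wt (F : {set V}) (x : V) : \bar R :=
  if [exists I, spans_in F x I]
  then ((\big[minn/#|F|]_(I | spans_in F x I) #|I|)%:R)%:E
  else +oo%E.

Definition proj_dist (F : {set V}) (x y : V) : \bar R := proj_wt F (y - x).

Definition is_projective (d : V -> V -> \bar R) : Prop :=
  exists F : {set V}, pairwise_li F /\ forall x y, d x y = proj_dist F x y.

Definition integral (d : V -> V -> \bar R) : Prop :=
  forall x y, d x y = +oo%E \/ exists k : nat, d x y = (k%:R)%:E.

Definition scale_invariant (d : V -> V -> \bar R) : Prop :=
  forall (a : K) x y, a != 0 -> d (a *: x) (a *: y) = d x y.

Definition translation_invariant (d : V -> V -> \bar R) : Prop :=
  forall x y z, d (x + z) (y + z) = d x y.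

Definition convex (d : V -> V -> \bar R) : Prop :=
  forall v1 v2 (k : nat), d v1 v2 = (k%:R)%:E ->
  forall i : nat, (i <= k)%N ->
  exists x, d v1 x = (i%:R)%:E /\ d x v2 = ((k - i)%N%:R)%:E.

End Defs.

(* For convexity,
   split a minimal spanning set of y - x, of size k, into parts of sizes i and
   k - i: this splits y - x into two vectors of weights at most i and k - i,
   and subadditivity of the weight forces equality.
   Conversely, for an integral, convex, invariant metric d take F to be one
   vector on each line through a point at distance 1 from 0.  The triangle
   inequality and scale invariance give d(0, x) <= |I| whenever I spans x, and
   convexity peels off, one at a time, k vectors at distance 1 from any x with
   d(0, x) = k, so that x is spanned by k elements of F. *)

From HB Require Import structures.
From mathcomp Require Import all_boot all_order all_algebra.
From mathcomp Require Import reals constructive_ereal.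
From mathcomp Require Import zify.
Set Implicit Arguments. Unset Strict Implicit. Unset Printing Implicit Defensive.
Import Order.TTheory GRing.Theory Num.Theory.
Local Open Scope ring_scope.

Section NatEreal.
Variable R : realType.

Lemma EFin_nat_inj (m k : nat) : ((m%:R)%:E : \bar R) = (k%:R)%:E -> m = k.
Proof. by move=> [] /eqP; rewrite eqr_nat => /eqP. Qed.

Lemma lee_nat (m k : nat) : (((m%:R)%:E : \bar R) <= (k%:R)%:E)%E = (m <= k)%N.
Proof. by rewrite lee_fin ler_nat. Qed.

Lemma EFin_natD (m k : nat) :
  (((m%:R)%:E : \bar R) + (k%:R)%:E)%E = ((m + k)%N%:R)%:E.
Proof. by rewrite -EFinD natrD. Qed.

End NatEreal.

Section ProjectiveWeight.
Variables (R : realType) (K : finFieldType) (n : nat).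
Local Notation V := 'rV[K]_n.
Implicit Types (F I J : {set V}) (x y : V).

Lemma span_enum_setU I J : <<enum (I :|: J)>>%VS = (<<enum I>> + <<enum J>>)%VS.
Proof. by rewrite -span_cat; apply: eq_span => v; rewrite mem_cat !mem_enum inE. Qed.

Lemma spans_inD F x y I J : spans_in F x I -> spans_in F y J ->
  spans_in F (x + y) (I :|: J).
Proof.
case/andP=> IF xI /andP[JF yJ].
by rewrite /spans_in subUset IF JF span_enum_setU memv_add.
Qed.

Lemma spans_in_seq F x (s : seq V) : {subset s <= F} -> x \in <<s>>%VS ->
  spans_in F x [set y in s].
Proof.
move=> sF xs; apply/andP; split; first by apply/subsetP=> y; rewrite inE; apply: sF.
suff -> : <<enum [set y in s]>>%VS = <<s>>%VS by [].
by apply: eq_span => y; rewrite mem_enum inE.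
Qed.

Variant proj_wt_spec F x : \bar R -> Prop :=
| ProjWtInfty of (forall I, ~~ spans_in F x I) : proj_wt_spec F x +oo%E
| ProjWtMin I of spans_in F x I & (forall J, spans_in F x J -> #|I| <= #|J|)%N :
    proj_wt_spec F x (#|I|%:R)%:E.

Lemma proj_wtP F x : proj_wt_spec F x (proj_wt R F x).
Proof.
rewrite /proj_wt; case: existsP => [[I0 sI0]|noI]; last first.
  by constructor=> I; apply: contra_notN noI => sI; exists I.
have le_cardF I : spans_in F x I -> (#|I| <= #|F|)%N.
  by case/andP=> /subset_leq_card.
have [I sI minE] := @eq_bigmin _ _ _ _ I0 _ (fun I => #|I|) sI0 le_cardF.
rewrite minE; constructor=> // J sJ; rewrite -minE.
exact: (@bigmin_le_cond _ nat).
Qed.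

Lemma proj_wt_le_card F x I : spans_in F x I ->
  exists2 m, proj_wt R F x = (m%:R)%:E & (m <= #|I|)%N.
Proof.
move=> sI; case: proj_wtP => [noI|J _ minJ]; first by have := noI I; rewrite sI.
by exists #|J|; rewrite ?minJ.
Qed.

Lemma proj_wt_le_size F x (s : seq V) : {subset s <= F} -> x \in <<s>>%VS ->
  exists2 m, proj_wt R F x = (m%:R)%:E & (m <= size s)%N.
Proof.
move=> sF xs; have [m -> le_m] := proj_wt_le_card (spans_in_seq sF xs).
by exists m; rewrite // (leq_trans le_m) // cardsE card_size.
Qed.

Lemma proj_wt_spans F x k : proj_wt R F x = (k%:R)%:E ->
  exists2 I, spans_in F x I & #|I| = k.
Proof. by case: proj_wtP => // I sI _ /EFin_nat_inj; exists I. Qed.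

Lemma proj_wt_subadd F x y :
  (proj_wt R F (x + y) <= proj_wt R F x + proj_wt R F y)%E.
Proof.
case: (proj_wtP F x) => [_|I sI _]; case: (proj_wtP F y) => [_|J sJ _];
  rewrite ?addye ?addey ?leey //.
have [m -> le_m] := proj_wt_le_card (spans_inD sI sJ).
by rewrite EFin_natD lee_nat (leq_trans le_m) ?leq_card_setU.
Qed.

Lemma proj_wtZ F x (a : K) : a != 0 -> proj_wt R F (a *: x) = proj_wt R F x.
Proof.
move=> a0; have spansZ : spans_in F (a *: x) =1 spans_in F x.
  by move=> I; rewrite /spans_in rpredZeq (negbTE a0).
by rewrite /proj_wt (eq_existsb spansZ) (eq_bigl _ _ spansZ).
Qed.

Lemma proj_dist_integral F : integral (proj_dist R F).
Proof.
by move=> x y; rewrite /proj_dist; case: proj_wtP => [_|I _ _]; [left | right; exists #|I|].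
Qed.

Lemma proj_dist_scale_invariant F : scale_invariant (proj_dist R F).
Proof. by move=> a x y a0; rewrite /proj_dist -scalerBr proj_wtZ. Qed.

Lemma proj_dist_translation_invariant F : translation_invariant (proj_dist R F).
Proof. by move=> x y z; rewrite /proj_dist opprD addrACA subrr addr0. Qed.

Lemma proj_dist_convex F : convex (proj_dist R F).
Proof.
move=> v1 v2 k; rewrite /proj_dist => wtE i le_ik.
have [I /andP[IF vI] cardI] := proj_wt_spans wtE.
have IsubF : {subset enum I <= F} by move=> y; rewrite mem_enum; apply: (subsetP IF).
move: vI; rewrite -(cat_take_drop i (enum I)) span_cat => /memv_addP[w w_in [u u_in vE]].
have [m wE le_m] := proj_wt_le_size (fun y yI => IsubF y (mem_take yI)) w_in.
have [m' uE le_m'] := proj_wt_le_size (fun y yI => IsubF y (mem_drop yI)) u_in.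
rewrite size_takel -?cardE ?cardI // in le_m.
rewrite size_drop -cardE cardI in le_m'.
have := proj_wt_subadd F w u; rewrite -vE wtE wE uE EFin_natD lee_nat => le_k.
exists (v1 + w); rewrite addrC addKr opprD addrA vE addrAC subrr add0r wE uE.
by split; congr (_%:R)%:E; lia.
Qed.

Lemma projective_props (d : V -> V -> \bar R) : is_projective d ->
  [/\ integral d, convex d, scale_invariant d & translation_invariant d].
Proof.
case=> F [_ dE]; split.
- by move=> x y; rewrite dE; apply: proj_dist_integral.
- move=> v1 v2 k; rewrite dE => /proj_dist_convex cvx i le_ik.
  by have [x] := cvx i le_ik; exists x; rewrite !dE.
- by move=> a x y a0; rewrite !dE; apply: proj_dist_scale_invariant.
- by move=> x y z; rewrite !dE; apply: proj_dist_translation_invariant.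
Qed.

Section ProjectiveOfInvariant.
Variable d : V -> V -> \bar R.
Hypotheses (metric_d : is_metric d) (integral_d : integral d) (convex_d : convex d)
  (scale_d : scale_invariant d) (translation_d : translation_invariant d).

Let distE x y : d x y = d 0 (y - x).
Proof. by rewrite -(translation_d x y (- x)) subrr. Qed.

Let dist00 : d 0 0 = 0%E.
Proof. by case: metric_d => _ d0 _ _; apply/d0. Qed.

Let dist0Z (a : K) x : a != 0 -> d 0 (a *: x) = d 0 x.
Proof. by move=> a0; rewrite -{1}(scaler0 _ a) scale_d. Qed.

(* On each line through a point at distance 1 from 0, the nonzero multiple of
   least [enum_rank]; this picks one representative per line. *)
Definition unit_reps : {set V} := [set f : V | (d 0 f == 1%:E) &&
  [forall a : K, (a != 0) ==> (enum_rank f <= enum_rank (a *: f))%N]].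

Lemma unit_reps_dist f : f \in unit_reps -> d 0 f = 1%:E.
Proof. by rewrite inE => /andP[/eqP]. Qed.

Lemma unit_reps_rank_min f (a : K) : f \in unit_reps -> a != 0 ->
  (enum_rank f <= enum_rank (a *: f))%N.
Proof. by rewrite inE => /andP[_ /forallP/(_ a)/implyP]. Qed.

Lemma unit_reps_neq0 f : f \in unit_reps -> f != 0.
Proof.
move=> /unit_reps_dist df1; apply/eqP=> f0; move: df1.
by rewrite f0 dist00 => /eqP; rewrite eqe eq_sym oner_eq0.
Qed.

Lemma unit_line_rep y : d 0 y = 1%:E -> exists2 f, f \in unit_reps & y \in <[f]>%VS.
Proof.
move=> dy; pose multiple g := [exists a : K, (a != 0) && (g == a *: y)].
have multiple_y : multiple y by apply/existsP; exists 1; rewrite oner_eq0 scale1r eqxx.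
case: (arg_minnP (fun g => nat_of_ord (enum_rank g)) multiple_y).
move=> _ /existsP[a /andP[a0 /eqP->]] rank_min; exists (a *: y).
  rewrite inE dist0Z // dy eqxx; apply/forallP=> b; apply/implyP=> b0.
  by apply: rank_min; apply/existsP; exists (b * a); rewrite mulf_neq0 // scalerA eqxx.
by rewrite -[y in y \in _](scalerK a0); apply/memvZ/memv_line.
Qed.

Lemma unit_reps_pairwise_li : pairwise_li unit_reps.
Proof.
split=> [|x y xF yF]; first exact: unit_reps_neq0.
apply: contraNT; rewrite free_cons seq1_free unit_reps_neq0 // andbT span_seq1 negbK.
case/vlineP=> a xE; have a0 : a != 0.
  by apply: contraTneq _ (unit_reps_neq0 xF) => a0; rewrite xE a0 scale0r eqxx.
have le_yx := unit_reps_rank_min yF a0; rewrite -xE in le_yx.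
have le_xy := unit_reps_rank_min xF (invr_neq0 a0).
rewrite xE scalerA mulVf // scale1r -xE in le_xy.
by apply/eqP/enum_rank_inj/val_inj/eqP; rewrite eqn_leq le_xy le_yx.
Qed.

Lemma dist0_span_le (s : seq V) x : {subset s <= unit_reps} -> x \in <<s>>%VS ->
  (d 0 x <= (size s)%:R%:E)%E.
Proof.
elim: s x => [|f s IHs] x sF; first by rewrite span_nil memv0 => /eqP->; rewrite dist00.
rewrite span_cons => /memv_addP[_ /vlineP[a ->] [w w_in ->]].
case: metric_d => _ _ _ triangle.
apply: le_trans (triangle _ (a *: f) _) _.
rewrite [X in (_ + X)%E]distE addrAC subrr add0r -[size _]/(1 + size s)%N -EFin_natD.
apply: leeD; last by apply: IHs => // g gs; apply: sF; rewrite inE gs orbT.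
have [->|a0] := eqVneq a 0; first by rewrite scale0r dist00 lee_fin ler0n.
by rewrite dist0Z // unit_reps_dist // sF // mem_head.
Qed.

Lemma dist0_spanned k x : d 0 x = (k%:R)%:E ->
  exists2 I, spans_in unit_reps x I & (#|I| <= k)%N.
Proof.
elim: k x => [|k IHk] x dx.
  have <- : 0 = x by case: metric_d => _ d0 _ _; apply/d0.
  by exists set0; rewrite /spans_in ?sub0set ?mem0v ?cards0.
have [z [dz dzx]] := convex_d dx (leqnSn k).
rewrite subSnn distE in dzx.
have [I /andP[IF zI] le_Ik] := IHk z dz.
have [f fF xz_f] := unit_line_rep dzx.
exists (f |: I).
  rewrite /spans_in subUset sub1set fF IF setUC span_enum_setU enum_set1 span_seq1.
  by rewrite -(subrK z x) addrC memv_add.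
by rewrite cardsU1 (leq_add (leq_b1 _) le_Ik).
Qed.

Lemma proj_wt_unit_reps x : proj_wt R unit_reps x = d 0 x.
Proof.
have dist0_le_card I : spans_in unit_reps x I -> (d 0 x <= #|I|%:R%:E)%E.
  case/andP=> IF xI; rewrite cardE; apply: dist0_span_le xI => f.
  by rewrite mem_enum; apply: (subsetP IF).
case: (integral_d 0 x) => [dx|[k dx]]; case: proj_wtP => [noI|I sI minI].
- by [].
- by have := dist0_le_card I sI; rewrite dx leye_eq.
- by have [I sI _] := dist0_spanned dx; have := noI I; rewrite sI.
have [J sJ le_Jk] := dist0_spanned dx.
have := dist0_le_card I sI; rewrite dx lee_nat => le_kI.
by congr (_%:R)%:E; apply/eqP; rewrite eqn_leq le_kI (leq_trans (minI J sJ)).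
Qed.

End ProjectiveOfInvariant.
End ProjectiveWeight.

Theorem proposition3p2 (R : realType) (K : finFieldType) (n : nat)
  (d : 'rV[K]_n -> 'rV[K]_n -> \bar R) :
  is_metric d ->
  (is_projective d <->
   [/\ integral d, convex d, scale_invariant d & translation_invariant d]).
Proof.
move=> metric_d; split; first exact: projective_props.
case=> integral_d convex_d scale_d translation_d.
exists (unit_reps d); split; first exact: unit_reps_pairwise_li.
move=> x y; rewrite /proj_dist proj_wt_unit_reps //.
by rewrite -(translation_d x y (- x)) subrr.
Qed.
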